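(* Let $V=[n]$, let $r:2^V\to\mathbb{R}_+$ be monotone, submodular and normalized ($r(\emptyset)=0$), and let $\mathbf{P}=\{\vec{x}\in\mathbb{R}^V:\vec{x}\ge 0,\ \vec{x}(S)\le r(S)\ \forall S\subseteq V\}$. Let $a,b,c\in\mathbb{R}^V_{\ge 0}$ be such that $a+c\in\mathbf{P}$, $b\in\mathbf{P}$, and $a\le b$ coordinate-wise. Then there exists a vector $d\in\mathbb{R}^V$ such that $0\le d\le c$, $b+d\in\mathbf{P}$, and $\|c-d\|_1\le\|b-a\|_1$.
   Context: $\vec{x}(S)=\sum_{i\in S}\vec{x}_i$. Inequalities between vectors are coordinate-wise. *)

(* Ground set V = [n] is modelled as 'I_n; vectors in R^V
   are functions 'I_n -> R; set functions are {set 'I_n} -> R. *)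
From mathcomp Require Import all_boot all_order all_algebra.
From mathcomp Require Import reals.
Set Implicit Arguments. Unset Strict Implicit. Unset Printing Implicit Defensive.
Import Order.TTheory GRing.Theory Num.Theory.
Local Open Scope ring_scope.

Section Defs.
Variables (R : realType) (n : nat).

Definition vsum (x : 'I_n -> R) (S : {set 'I_n}) : R := \sum_(i in S) x i.

Definition set_monotone (r : {set 'I_n} -> R) : Prop :=
  forall S T : {set 'I_n}, S \subset T -> r S <= r T.

Definition set_submodular (r : {set 'I_n} -> R) : Prop :=
  forall S T : {set 'I_n}, r (S :|: T) + r (S :&: T) <= r S + r T.

Definition set_normalized (r : {set 'I_n} -> R) : Prop := r set0 = 0.

Definition set_nonneg (r : {set 'I_n} -> R) : Prop := forall S, 0 <= r S.

Definition vle (x y : 'I_n -> R) : Prop := forall i, x i <= y i.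

Definition in_polymatroid (r : {set 'I_n} -> R) (x : 'I_n -> R) : Prop :=
  vle (fun _ => 0) x /\ forall S : {set 'I_n}, vsum x S <= r S.

Definition norm1 (x : 'I_n -> R) : R := \sum_i `|x i|.

End Defs.

From mathcomp Require Import all_boot all_order all_algebra.
From mathcomp Require Import reals.
From mathcomp Require Import lra.

Set Implicit Arguments. Unset Strict Implicit. Unset Printing Implicit Defensive.
Import Order.TTheory GRing.Theory Num.Theory.
Local Open Scope ring_scope.

(* Raise b greedily, one coordinate after the other, towards b + c, stopping
   each coordinate as soon as it reaches b + c or enters a tight set.  By
   submodularity the tight sets of the resulting point y = b + d are closed
   under union, so there is a largest tight set U, and d = c outside U.  Hence
   ||c - d||_1 = c(U) - d(U) = c(U) + b(U) - r(U) <= c(U) + b(U) - (a + c)(U)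
   = (b - a)(U) <= ||b - a||_1. *)

Section Polymatroid.
Variables (R : realType) (n : nat) (r : {set 'I_n} -> R).

Definition rank_bounded (x : 'I_n -> R) : Prop := forall S, vsum x S <= r S.

Definition tight (x : 'I_n -> R) (S : {set 'I_n}) : bool := vsum x S == r S.

Lemma vsumUI (x : 'I_n -> R) (S T : {set 'I_n}) :
  vsum x (S :|: T) + vsum x (S :&: T) = vsum x S + vsum x T.
Proof.
rewrite /vsum !(big_mkcond (fun i => i \in _)) -!big_split.
apply: eq_bigr => i _; rewrite in_setU in_setI.
by case: (i \in S); case: (i \in T); rewrite /= ?addr0 ?add0r.
Qed.

Lemma tight_le (x y : 'I_n -> R) (S : {set 'I_n}) :
  vle x y -> rank_bounded y -> tight x S -> tight y S.
Proof.
move=> le_xy yr /eqP xS; rewrite /tight eq_le yr -xS.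
by apply: ler_sum => i _; exact: le_xy.
Qed.

Definition bump (x : 'I_n -> R) (k : 'I_n) (t : R) : 'I_n -> R :=
  fun j => x j + (if j == k then t else 0).

Lemma vsum_bump (x : 'I_n -> R) k t S :
  vsum (bump x k t) S = vsum x S + (if k \in S then t else 0).
Proof.
rewrite /vsum big_split /=; congr (_ + _); rewrite -big_mkcondr.
case: ifP => kS.
  by rewrite (big_pred1 k) // => j /=; rewrite andbC; case: eqP => [->|].
by rewrite big1 // => j /andP[jS /eqP jk]; rewrite jk kS in jS.
Qed.

Lemma vle_bump (x : 'I_n -> R) k t : 0 <= t -> vle x (bump x k t).
Proof. by move=> t0 i; rewrite /bump lerDl; case: eqP. Qed.

(* The step is the least slack r(S) - x(S) over the sets S containing k,
   capped at u. *)
Lemma bump_until_tight (x : 'I_n -> R) (k : 'I_n) (u : R) :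
  rank_bounded x -> 0 <= u ->
  exists t : R, [/\ 0 <= t, t <= u, rank_bounded (bump x k t) &
    t = u \/ exists2 S : {set 'I_n}, k \in S & tight (bump x k t) S].
Proof.
move=> xr u0.
have kT : k \in [set: 'I_n] by rewrite inE.
case: (@arg_minP _ _ _ _ (fun S : {set 'I_n} => k \in S)
                 (fun S => r S - vsum x S) kT) => S0 kS0 S0min.
set m := r S0 - vsum x S0.
have m0 : 0 <= m by rewrite subr_ge0.
exists (Num.min u m); split.
- by rewrite le_min u0 m0.
- by rewrite ge_min lexx.
- move=> S; rewrite vsum_bump; case: ifP => kS; last by rewrite addr0.
  have := S0min S kS; have : Num.min u m <= m by rewrite ge_min lexx orbT.
  rewrite -/m; lra.
- have [_|_] := leP u m; [by left | right].
  exists S0 => //; rewrite /tight vsum_bump kS0 /m.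
  by apply/eqP; lra.
Qed.

Lemma greedy_raise (b c : 'I_n -> R) (k : nat) :
  vle (fun _ => 0) c -> rank_bounded b -> (k <= n)%N ->
  exists y : 'I_n -> R,
    [/\ vle b y, vle y (fun i => b i + c i), rank_bounded y &
      forall j : 'I_n, (j < k)%N ->
        y j = b j + c j \/ exists2 S : {set 'I_n}, j \in S & tight y S].
Proof.
move=> c0 br; elim: k => [|k IH] lt_kn.
  by exists b; split=> // i; rewrite lerDl.
have [y [le_by le_ybc yr sat]] := IH (ltnW lt_kn).
pose k' : 'I_n := Ordinal lt_kn.
have u0 : 0 <= b k' + c k' - y k' by rewrite subr_ge0.
have [t [t0 tu ytr tsat]] := bump_until_tight k' yr u0.
have le_yyt := vle_bump y k' t0.
exists (bump y k' t); split => //.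
- by move=> i; apply: le_trans (le_yyt i).
- by move=> i; have := le_ybc i; rewrite /bump; case: eqP => [->|_]; lra.
move=> j; rewrite ltnS leq_eqVlt => /orP[/eqP jk | lt_jk].
  have -> : j = k' by apply: val_inj.
  case: tsat => [tu'|]; last by right.
  by left; rewrite /bump eqxx tu'; lra.
have jk' : (j == k') = false by apply/negbTE/eqP => jk; rewrite jk ltnn in lt_jk.
case: (sat j lt_jk) => [yj | [S jS yS]].
  by left; rewrite /bump jk' addr0.
by right; exists S => //; exact: tight_le yS.
Qed.

Hypothesis r_submod : set_submodular r.

Lemma tightU (x : 'I_n -> R) (S T : {set 'I_n}) :
  rank_bounded x -> tight x S -> tight x T -> tight x (S :|: T).
Proof.
move=> xr /eqP xS /eqP xT; rewrite /tight eq_le xr /=.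
have := r_submod S T; have := vsumUI x S T; have := xr (S :&: T); lra.
Qed.

Definition max_tight (x : 'I_n -> R) : {set 'I_n} :=
  \bigcup_(S | tight x S) S.

Lemma max_tightP (x : 'I_n -> R) :
  set_normalized r -> rank_bounded x -> tight x (max_tight x).
Proof.
move=> r0 xr; apply: (big_ind (tight x)) => //.
- by rewrite /tight /vsum big_set0 r0.
- by move=> S T; exact: tightU.
Qed.

End Polymatroid.

Lemma norm1_subr_le (R : realType) (n : nat) (a b c d : 'I_n -> R)
    (U : {set 'I_n}) :
  vle a b -> vle d c -> (forall j, j \notin U -> d j = c j) ->
  vsum (fun i => a i + c i) U <= vsum (fun i => b i + d i) U ->
  norm1 (fun i => c i - d i) <= norm1 (fun i => b i - a i).
Proof.
move=> le_ab le_dc eq_dc leU.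
rewrite /norm1 (bigID (mem U)) [X in _ <= X](bigID (mem U)) /=.
rewrite [X in _ + X <= _]big1 ?addr0; last first.
  by move=> i /eq_dc ->; rewrite subrr normr0.
have cdU : \sum_(i in U) `|c i - d i| = vsum c U - vsum d U.
  by rewrite /vsum -sumrB; apply: eq_bigr => i _; rewrite ger0_norm // subr_ge0.
have baU : \sum_(i in U) `|b i - a i| = vsum b U - vsum a U.
  by rewrite /vsum -sumrB; apply: eq_bigr => i _; rewrite ger0_norm // subr_ge0.
have out0 : 0 <= \sum_(i | i \notin U) `|b i - a i| by apply: sumr_ge0.
rewrite cdU baU; move: leU; rewrite /vsum !big_split /=; lra.
Qed.

Theorem lemma3p1 (R : realType) (n : nat) (r : {set 'I_n} -> R)
    (a b c : 'I_n -> R) :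
  set_nonneg r -> set_monotone r -> set_submodular r -> set_normalized r ->
  vle (fun _ => 0) a -> vle (fun _ => 0) b -> vle (fun _ => 0) c ->
  in_polymatroid r (fun i => a i + c i) ->
  in_polymatroid r b ->
  vle a b ->
  exists d : 'I_n -> R,
    [/\ vle (fun _ => 0) d, vle d c,
        in_polymatroid r (fun i => b i + d i) &
        norm1 (fun i => c i - d i) <= norm1 (fun i => b i - a i)].
Proof.
move=> _ _ r_submod r0 _ b0 c0 [_ acr] [_ br] le_ab.
have [y [le_by le_ybc yr sat]] := greedy_raise c0 br (leqnn n).
pose d i := y i - b i.
have bdE i : b i + d i = y i by rewrite /d addrC subrK.
have vsum_bd S : vsum (fun i => b i + d i) S = vsum y S.
  by apply: eq_bigr => i _; rewrite bdE.
have /eqP tU := max_tightP r_submod r0 yr.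
exists d; split.
- by move=> i; rewrite subr_ge0.
- by move=> i; have := le_ybc i; rewrite /d; lra.
- by split=> [i | S]; rewrite ?bdE ?vsum_bd //; exact: le_trans (le_by i).
apply: (norm1_subr_le (U := max_tight r y)) => // [i | j jU | ].
- by have := le_ybc i; rewrite /d; lra.
- case: (sat j (ltn_ord j)) => [yj | [S jS yS]]; first by rewrite /d yj; lra.
  by move: jU; rewrite (subsetP (bigcup_sup S yS)).
- by rewrite vsum_bd tU; exact: acr.
Qed.
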